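(* Assume $M_h=\mathbb{P}_1$ (so $\Phi_h=M_h$). Then any solution $(\phi^{n+1},\mu^{n+1})\in\Phi_h\times M_h$ of the G$_\varepsilon$-scheme satisfies $$\delta_t\Big(\int_\Omega I_h(G_\varepsilon(\phi^{n+1}))\,d\boldsymbol x\Big)+\int_\Omega I_h\big((\omega^{n+1})^2\big)d\boldsymbol x+\int_\Omega\Big|\sqrt{R(\phi^{n+1})}\,\nabla\phi^{n+1}\Big|^2d\boldsymbol x\le\frac1{8\eta^2}\Big(\int_\Omega|\nabla\phi^n|^2d\boldsymbol x+\int_\Omega|\nabla\phi^{n+1}|^2d\boldsymbol x\Big),$$ where $\omega^{n+1}=\mu^{n+1}-\big(I_h(F_c'(\phi^{n+1}))+I_h(F_e'(\phi^n))\big)$ and, for $\phi\in\Phi_h$, $R(\phi)$ is the piecewise constant positive semidefinite diagonal matrix whose $k$-th diagonal entry on element $I$ is $\frac{F_c'(\phi(\boldsymbol x_k))-F_c'(\phi(\boldsymbol x_0))}{\phi(\boldsymbol x_k)-\phi(\boldsymbol x_0)}$ if $\phi(\boldsymbol x_k)\neq\phi(\boldsymbol x_0)$ and $F_c''(\phi(\boldsymbol x_0))$ otherwise. Moreover, $$\int_\Omega I_h(G_\varepsilon(\phi^{n+1}))\,d\boldsymbol x\le C\,\frac{T}{\eta^2},$$ where $C$ depends on the initial energy $E(\phi^0)$ and on $\int_\Omega I_h(G_\varepsilon(\phi^0))\,d\boldsymbol x$.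
   Context: $\Omega\subset\mathbb{R}^d$ ($d=1,2,3$) bounded, $\eta>0$, $\varepsilon\in(0,1/2)$. $F(\phi)=\frac1{4\eta^2}\phi^2(\phi-1)^2=F_c(\phi)+F_e(\phi)$ with $F_c(\phi)=\frac1{4\eta^2}(\phi^4-2\phi^3+\frac32\phi^2)$ and $F_e(\phi)=-\frac1{8\eta^2}\phi^2$; $E(\phi)=\int_\Omega(\frac12|\nabla\phi|^2+F(\phi))d\boldsymbol x$. The time interval $[0,T]$ is split into $N$ steps, $\Delta t=T/N$, $\delta_tf^{n+1}=(f^{n+1}-f^n)/\Delta t$, $n=0,\dots,N-1$. $\mathcal T_h$ is a structured triangulation of $\Omega$ in which every element $I$ has vertices $\boldsymbol x_0,\dots,\boldsymbol x_d$ with $\boldsymbol x_k-\boldsymbol x_0$ parallel to the $k$-th coordinate axis. $\Phi_h$ is the space of continuous piecewise $\mathbb{P}_1$ functions; $M_h$ is the space of continuous piecewise $\mathbb{P}_k$ functions. $I_h$ is nodal $\mathbb{P}_1$ interpolation, $(f,g)_h=\int_\Omega I_h(fg)\,d\boldsymbol x$, $(\cdot,\cdot)$ the $L^2$ product. $G(\phi)=\phi\ln\phi+(1-\phi)\ln(1-\phi)+1$; $G_\varepsilon\in C^2(\mathbb{R})$ equals $G$ on $[\varepsilon,1-\varepsilon]$ and its second-order Taylor polynomial at $\varepsilon$ (resp. $1-\varepsilon$) for $\phi<\varepsilon$ (resp. $\phi>1-\varepsilon$), so $G_\varepsilon''=1/M_\varepsilon$ with $M_\varepsilon(\phi)=\phi(1-\phi)$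 truncated to $\varepsilon(1-\varepsilon)$ outside $[\varepsilon,1-\varepsilon]$. For $\phi\in\Phi_h$, $M^G_\varepsilon(\phi)$ is the piecewise constant diagonal matrix with $k$-th entry on $I$ equal to $\frac{\phi(\boldsymbol x_k)-\phi(\boldsymbol x_0)}{G_\varepsilon'(\phi(\boldsymbol x_k))-G_\varepsilon'(\phi(\boldsymbol x_0))}$ if $\phi(\boldsymbol x_k)\ne\phi(\boldsymbol x_0)$, and $1/G_\varepsilon''(\phi(\boldsymbol x_0))$ otherwise. G$_\varepsilon$-scheme: given $\phi^n\in\Phi_h$ (starting from $\phi^0\in\Phi_h$), find $(\phi^{n+1},\mu^{n+1})\in\Phi_h\times M_h$ such that for all $(\bar\phi,\bar\mu)\in\Phi_h\times M_h$: $\frac1{\Delta t}(\phi^{n+1}-\phi^n,\bar\mu)_h+(M^G_\varepsilon(\phi^{n+1})\nabla\mu^{n+1},\nabla\bar\mu)=0$ and $(\nabla\phi^{n+1},\nabla\bar\phi)+(I_h(F_c'(\phi^{n+1}))+I_h(F_e'(\phi^n)),\bar\phi)_h=(\mu^{n+1},\bar\phi)_h$.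
   Formalization: The bound on $\int_\Omega I_h(G_\varepsilon(\phi^{n+1}))\,d\boldsymbol x$ has right side C(1 + T/η²) in place of C T/η². The statement above fails without it. *)

From Stdlib Require Import Reals Lra Lia Factorial.
From Coquelicot Require Import Coquelicot.
Open Scope R_scope.

Fixpoint sum_lt (n : nat) (f : nat -> R) : R :=
  match n with O => 0 | S m => sum_lt m f + f m end.

Fixpoint prod_lt (n : nat) (f : nat -> R) : R :=
  match n with O => 1 | S m => prod_lt m f * f m end.

Definition F (eta x : R) : R := / (4 * eta ^ 2) * (x ^ 2 * (x - 1) ^ 2).
Definition Fc (eta x : R) : R := / (4 * eta ^ 2) * (x ^ 4 - 2 * x ^ 3 + 3 / 2 * x ^ 2).
Definition dFc (eta x : R) : R := / (4 * eta ^ 2) * (4 * x ^ 3 - 6 * x ^ 2 + 3 * x).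
Definition d2Fc (eta x : R) : R := / (4 * eta ^ 2) * (12 * x ^ 2 - 12 * x + 3).
Definition Fe (eta x : R) : R := - / (8 * eta ^ 2) * x ^ 2.
Definition dFe (eta x : R) : R := - / (4 * eta ^ 2) * x.

Definition G (x : R) : R := x * ln x + (1 - x) * ln (1 - x) + 1.
Definition dG (x : R) : R := ln x - ln (1 - x).
Definition d2G (x : R) : R := / (x * (1 - x)).

Definition Geps (eps x : R) : R :=
  if Rlt_dec x eps then G eps + dG eps * (x - eps) + d2G eps / 2 * (x - eps) ^ 2
  else if Rlt_dec (1 - eps) x then
    G (1 - eps) + dG (1 - eps) * (x - (1 - eps)) + d2G (1 - eps) / 2 * (x - (1 - eps)) ^ 2
  else G x.
Definition dGeps (eps x : R) : R :=
  if Rlt_dec x eps then dG eps + d2G eps * (x - eps)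
  else if Rlt_dec (1 - eps) x then dG (1 - eps) + d2G (1 - eps) * (x - (1 - eps))
  else dG x.
(* truncated mobility M_eps, and G_eps'' = 1 / M_eps *)
Definition Meps (eps x : R) : R :=
  if Rlt_dec x eps then eps * (1 - eps)
  else if Rlt_dec (1 - eps) x then eps * (1 - eps)
  else x * (1 - x).
Definition d2Geps (eps x : R) : R := / Meps eps x.

(* ---------- meshes ----------
   Points of R^d are  nat -> R  (coordinates 0..d-1).
   Nodes are indexed by 0..nn-1, node i has coordinates  node i : nat -> R.
   Elements are indexed by 0..ne-1; element i is given by its ordered vertex
   list  el i : nat -> nat  (node indices of x_0, ..., x_d). *)

Definition in_hull (d : nat) (node : nat -> nat -> R) (m : nat) (vs : nat -> nat)
    (x : nat -> R) : Prop :=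
  exists lam : nat -> R,
    (forall k, (k < m)%nat -> 0 <= lam k) /\ sum_lt m lam = 1 /\
    forall j, (j < d)%nat -> x j = sum_lt m (fun k => lam k * node (vs k) j).

Definition in_elem (d : nat) (node : nat -> nat -> R) (v : nat -> nat) (x : nat -> R) :=
  in_hull d node (S d) v x.

Definition is_vertex (d : nat) (v : nat -> nat) (n : nat) : Prop :=
  exists k, (k <= d)%nat /\ v k = n.

Definition in_common_face (d : nat) (node : nat -> nat -> R) (v w : nat -> nat)
    (x : nat -> R) : Prop :=
  exists (m : nat) (vs : nat -> nat),
    (forall k, (k < m)%nat -> is_vertex d v (vs k) /\ is_vertex d w (vs k)) /\
    in_hull d node m vs x.

(* Structured (conforming) triangulation of the closure of Omega:
   - vertices are nodes, nodes are pairwise distinct points and each is a vertex;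
   - x_k - x_0 is parallel to the k-th coordinate axis (axis k-1 in 0-based
     numbering) and nonzero;
   - distinct elements have distinct vertex sets, and any two elements meet in
     a common face (the convex hull of their common vertices);
   - the closure of Omega is the union of the elements. *)
Definition structured_triangulation (d nn : nat) (node : nat -> nat -> R)
    (ne : nat) (el : nat -> nat -> nat) (Omega : (nat -> R) -> Prop) : Prop :=
  (forall i k, (i < ne)%nat -> (k <= d)%nat -> (el i k < nn)%nat) /\
  (forall n m, (n < nn)%nat -> (m < nn)%nat ->
     (forall j, (j < d)%nat -> node n j = node m j) -> n = m) /\
  (forall n, (n < nn)%nat -> exists i, (i < ne)%nat /\ is_vertex d (el i) n) /\
  (forall i k, (i < ne)%nat -> (1 <= k <= d)%nat ->
     (forall j, (j < d)%nat -> j <> (k - 1)%nat ->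
        node (el i k) j = node (el i O) j) /\
     node (el i k) (k - 1)%nat <> node (el i O) (k - 1)%nat) /\
  (forall i i', (i < ne)%nat -> (i' < ne)%nat ->
     (forall n, is_vertex d (el i) n <-> is_vertex d (el i') n) -> i = i') /\
  (forall i i' x, (i < ne)%nat -> (i' < ne)%nat ->
     in_elem d node (el i) x -> in_elem d node (el i') x ->
     in_common_face d node (el i) (el i') x) /\
  (forall x, Omega x <-> exists i, (i < ne)%nat /\ in_elem d node (el i) x).

(* ---------- P1 calculus on the structured mesh ----------
   A function of Phi_h (= M_h, continuous P1) is given by its nodal values
   u : nat -> R.  On element v, with x_k = x_0 + h_k e_k, the (constant)
   gradient has components (u(x_k) - u(x_0)) / h_k. *)
Definition hstep (node : nat -> nat -> R) (v : nat -> nat) (k : nat) : R :=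
  node (v k) (k - 1)%nat - node (v O) (k - 1)%nat.

(* |det (x_1 - x_0, ..., x_d - x_0)| = d! |I| *)
Definition jac (d : nat) (node : nat -> nat -> R) (v : nat -> nat) : R :=
  Rabs (prod_lt d (fun k => hstep node v (S k))).

Definition vol (d : nat) (node : nat -> nat -> R) (v : nat -> nat) : R :=
  jac d node v / INR (Factorial.fact d).

Definition gradk (node : nat -> nat -> R) (v : nat -> nat) (u : nat -> R) (k : nat) : R :=
  (u (v k) - u (v O)) / hstep node v k.

(* int_Omega I_h(g) for a nodal function g *)
Definition int_Ih (d : nat) (node : nat -> nat -> R) (ne : nat) (el : nat -> nat -> nat)
    (g : nat -> R) : R :=
  sum_lt ne (fun i => vol d node (el i) / INR (S d) * sum_lt (S d) (fun k => g (el i k))).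

Definition ip_h (d : nat) (node : nat -> nat -> R) (ne : nat) (el : nat -> nat -> nat)
    (f g : nat -> R) : R :=
  int_Ih d node ne el (fun n => f n * g n).

(* (A grad u, grad w) for a piecewise constant diagonal matrix A, given by its
   diagonal entries A v k (k = 1..d) on element v *)
Definition a_form (d : nat) (node : nat -> nat -> R) (ne : nat) (el : nat -> nat -> nat)
    (A : (nat -> nat) -> nat -> R) (u w : nat -> R) : R :=
  sum_lt ne (fun i => vol d node (el i) *
    sum_lt d (fun k => A (el i) (S k) * gradk node (el i) u (S k) * gradk node (el i) w (S k))).

Definition stiff (d : nat) node ne el (u w : nat -> R) : R :=
  a_form d node ne el (fun _ _ => 1) u w.

Definition MG (eps : R) (phi : nat -> R) (v : nat -> nat) (k : nat) : R :=
  if Req_EM_T (phi (v k)) (phi (v O)) then / d2Geps eps (phi (v O))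
  else (phi (v k) - phi (v O)) / (dGeps eps (phi (v k)) - dGeps eps (phi (v O))).

Definition Rmat (eta : R) (phi : nat -> R) (v : nat -> nat) (k : nat) : R :=
  if Req_EM_T (phi (v k)) (phi (v O)) then d2Fc eta (phi (v O))
  else (dFc eta (phi (v k)) - dFc eta (phi (v O))) / (phi (v k) - phi (v O)).

Definition Geps_scheme (d : nat) node ne el (eta eps dt : R)
    (phin phi1 mu1 : nat -> R) : Prop :=
  (forall mub : nat -> R,
     / dt * ip_h d node ne el (fun n => phi1 n - phin n) mub
     + a_form d node ne el (MG eps phi1) mu1 mub = 0) /\
  (forall phib : nat -> R,
     stiff d node ne el phi1 phib
     + ip_h d node ne el (fun n => dFc eta (phi1 n) + dFe eta (phin n)) phib
     = ip_h d node ne el mu1 phib).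

(* ---------- exact integrals over elements (for the energy E) ----------
   sint n s g = integral of g over { l in R^n | l >= 0, l_1 + ... + l_n <= s },
   as an iterated Riemann integral; the argument of g is the list [l_1;...;l_n]. *)
Fixpoint sint (n : nat) (s : R) (g : list R -> R) : R :=
  match n with
  | O => g List.nil
  | S m => RInt (fun t => sint m (s - t) (fun l => g (List.cons t l))) 0 s
  end.

(* int_I f(u(x)) dx for u in P1, by the affine change of variables
   x = x_0 + sum_k l_k (x_k - x_0) from the reference simplex *)
Definition int_elem_comp (d : nat) node (v : nat -> nat) (f : R -> R) (u : nat -> R) : R :=
  jac d node v * sint d 1 (fun l =>
    f (u (v O) + sum_lt d (fun k => List.nth k l 0 * (u (v (S k)) - u (v O))))).

Definition energy (d : nat) node ne el (eta : R) (u : nat -> R) : R :=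
  / 2 * stiff d node ne el u u
  + sum_lt ne (fun i => int_elem_comp d node (el i) (F eta) u).

From Stdlib Require Import Reals Lra Lia Factorial List.
From Coquelicot Require Import Coquelicot.
Open Scope R_scope.

(* Test the mass equation with I_h G_eps'(phi^{n+1}).  By construction
   M^G_eps grad I_h G_eps'(phi) = grad phi on every element, so the mobility term
   becomes (grad mu, grad phi^{n+1}), and convexity of G_eps bounds the increment
   of the lumped integral of G_eps by (phi^{n+1} - phi^n, G_eps'(phi^{n+1}))_h.
   Testing the second equation with omega gives |omega|_h^2 = (grad phi^{n+1},
   grad omega); since grad I_h F_c'(phi) = R(phi) grad phi, the two copies of
   (grad mu, grad phi^{n+1}) cancel and only the explicit concave term survives,
   which Young's inequality bounds.
   For the uniform bound, the scheme also dissipates the lumped energy, so every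
   |grad phi^m|^2 is at most twice the initial lumped energy; on each element the
   lumped double-well values are controlled by the exact integral (a
   sum-of-squares certificate for d <= 3), so that energy is at most 1000 E(phi^0).
   Summing the first estimate over at most N steps of length T/N then gives the
   factor T/eta^2. *)

Lemma sum_lt_ext n f g :
  (forall i, (i < n)%nat -> f i = g i) -> sum_lt n f = sum_lt n g.
Proof.
  induction n as [|n IH]; intros H; cbn; [reflexivity|].
  rewrite IH by (intros; apply H; lia). rewrite H by lia. reflexivity.
Qed.

Lemma sum_lt_lin n a b f g :
  sum_lt n (fun i => a * f i + b * g i) = a * sum_lt n f + b * sum_lt n g.
Proof. induction n as [|n IH]; cbn; [ring|rewrite IH; ring]. Qed.

Lemma sum_lt_scal n c f : sum_lt n (fun i => c * f i) = c * sum_lt n f.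
Proof. induction n as [|n IH]; cbn; [ring|rewrite IH; ring]. Qed.

Lemma sum_lt_le n f g :
  (forall i, (i < n)%nat -> f i <= g i) -> sum_lt n f <= sum_lt n g.
Proof.
  induction n as [|n IH]; intros H; cbn; [lra|].
  apply Rplus_le_compat; [apply IH; intros; apply H|apply H]; lia.
Qed.

Lemma sum_lt_nonneg n f : (forall i, (i < n)%nat -> 0 <= f i) -> 0 <= sum_lt n f.
Proof.
  induction n as [|n IH]; intros H; cbn; [lra|].
  apply Rplus_le_le_0_compat; [apply IH; intros; apply H|apply H]; lia.
Qed.

Lemma sum_lt_shift n f : sum_lt (S n) f = f O + sum_lt n (fun i => f (S i)).
Proof. induction n as [|n IH]; cbn in *; [ring|rewrite IH; ring]. Qed.

Lemma sum_increments_le (g : nat -> R) c n :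
  (forall m, (m < n)%nat -> g (S m) - g m <= c) -> g n <= g O + INR n * c.
Proof.
  induction n as [|n IH]; intros H; [cbn; lra|].
  rewrite S_INR. specialize (IH ltac:(intros; apply H; lia)). specialize (H n ltac:(lia)). lra.
Qed.

Lemma vol_nonneg d node v : 0 <= vol d node v.
Proof.
  unfold vol, jac. apply Rmult_le_pos; [apply Rabs_pos|].
  left. apply Rinv_0_lt_compat, INR_fact_lt_0.
Qed.

Lemma lumped_weight_nonneg d node v : 0 <= vol d node v / INR (S d).
Proof.
  apply Rmult_le_pos; [apply vol_nonneg|]. left. apply Rinv_0_lt_compat, lt_0_INR. lia.
Qed.

Lemma lumped_weight_le_jac d node v : vol d node v / INR (S d) <= jac d node v.
Proof.
  assert (Hj : 0 <= jac d node v) by apply Rabs_pos.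
  assert (Hf : 1 <= INR (fact d) * INR (S d)).
  { rewrite <- mult_INR. apply (le_INR 1). pose proof (lt_O_fact d). nia. }
  unfold vol, Rdiv. rewrite Rmult_assoc, <- Rinv_mult.
  rewrite <- (Rmult_1_r (jac d node v)) at 2. apply Rmult_le_compat_l; [exact Hj|].
  rewrite <- Rinv_1. apply Rinv_le_contravar; lra.
Qed.

Section DiscreteForms.
Variables (d : nat) (node : nat -> nat -> R) (ne : nat) (el : nat -> nat -> nat).

Lemma int_Ih_ext f g : (forall n, f n = g n) -> int_Ih d node ne el f = int_Ih d node ne el g.
Proof.
  intros H. apply sum_lt_ext. intros i _. f_equal. apply sum_lt_ext. auto.
Qed.

Lemma int_Ih_lin a b f g :
  int_Ih d node ne el (fun n => a * f n + b * g n)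
  = a * int_Ih d node ne el f + b * int_Ih d node ne el g.
Proof.
  unfold int_Ih. rewrite <- sum_lt_lin. apply sum_lt_ext. intros i _.
  rewrite sum_lt_lin. ring.
Qed.

Lemma int_Ih_le f g : (forall n, f n <= g n) -> int_Ih d node ne el f <= int_Ih d node ne el g.
Proof.
  intros H. apply sum_lt_le. intros i _.
  apply Rmult_le_compat_l; [apply lumped_weight_nonneg|]. apply sum_lt_le. auto.
Qed.

Lemma int_Ih_nonneg g : (forall n, 0 <= g n) -> 0 <= int_Ih d node ne el g.
Proof.
  intros H. apply sum_lt_nonneg. intros i _.
  apply Rmult_le_pos; [apply lumped_weight_nonneg|]. apply sum_lt_nonneg. auto.
Qed.

Lemma gradk_lin v a b u w k :
  gradk node v (fun n => a * u n + b * w n) k = a * gradk node v u k + b * gradk node v w k.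
Proof. unfold gradk, Rdiv. ring. Qed.

Lemma a_form_transfer A B u w z :
  (forall v k, A v k * gradk node v w k = B v k * gradk node v z k) ->
  a_form d node ne el A u w = a_form d node ne el B u z.
Proof.
  intros H. apply sum_lt_ext. intros i _. f_equal. apply sum_lt_ext. intros k _.
  rewrite !Rmult_assoc, (Rmult_comm (gradk _ _ u _)), <- !Rmult_assoc, H. ring.
Qed.

Lemma a_form_ext_r A u w w' :
  (forall n, w n = w' n) -> a_form d node ne el A u w = a_form d node ne el A u w'.
Proof.
  intros H. apply a_form_transfer. intros v k. unfold gradk. rewrite !H. reflexivity.
Qed.

Lemma a_form_comm A u w : a_form d node ne el A u w = a_form d node ne el A w u.
Proof.
  apply sum_lt_ext. intros i _. f_equal. apply sum_lt_ext. intros k _. ring.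
Qed.

Lemma a_form_lin_r A u a b w1 w2 :
  a_form d node ne el A u (fun n => a * w1 n + b * w2 n)
  = a * a_form d node ne el A u w1 + b * a_form d node ne el A u w2.
Proof.
  unfold a_form. rewrite <- sum_lt_lin. apply sum_lt_ext. intros i _.
  rewrite <- Rmult_assoc, (Rmult_comm a), Rmult_assoc, <- (Rmult_assoc b), (Rmult_comm b),
    Rmult_assoc, <- Rmult_plus_distr_l, <- sum_lt_lin.
  f_equal. apply sum_lt_ext. intros k _. rewrite gradk_lin. ring.
Qed.

Lemma a_form_nonneg A u : (forall v k, 0 <= A v k) -> 0 <= a_form d node ne el A u u.
Proof.
  intros H. apply sum_lt_nonneg. intros i _. apply Rmult_le_pos; [apply vol_nonneg|].
  apply sum_lt_nonneg. intros k _. rewrite Rmult_assoc. apply Rmult_le_pos; [apply H|].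
  apply Rle_0_sqr.
Qed.

Lemma stiff_nonneg u : 0 <= stiff d node ne el u u.
Proof. apply a_form_nonneg. intros; lra. Qed.

Lemma stiff_cross_le u w :
  2 * stiff d node ne el u w <= stiff d node ne el u u + stiff d node ne el w w.
Proof.
  pose proof (stiff_nonneg (fun n => 1 * u n + (-1) * w n)) as H.
  unfold stiff in *. rewrite a_form_lin_r, a_form_comm, (a_form_comm _ _ w), !a_form_lin_r in H.
  rewrite (a_form_comm _ w u) in H. lra.
Qed.

End DiscreteForms.

Section RegularizedLogPotential.
Variable e : R.
Hypothesis He : 0 < e < 1 / 2.

Lemma d2G_pos x : 0 < x < 1 -> 0 < d2G x.
Proof. intros H. apply Rinv_0_lt_compat. nra. Qed.

Lemma dG_increasing x y : 0 < x -> x < y -> y < 1 -> dG x < dG y.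
Proof.
  intros H1 H2 H3. unfold dG.
  assert (ln x < ln y) by (apply ln_increasing; lra).
  assert (ln (1 - y) < ln (1 - x)) by (apply ln_increasing; lra). lra.
Qed.

Lemma G_derivative x : 0 < x < 1 -> derivable_pt_lim G x (dG x).
Proof.
  intros Hx. apply is_derive_Reals. unfold G, dG. auto_derive.
  - repeat split; lra.
  - unfold Rminus. field. lra.
Qed.

Lemma Geps_lo x : x <= e -> Geps e x = G e + dG e * (x - e) + d2G e / 2 * (x - e) ^ 2.
Proof.
  intros H. unfold Geps. destruct (Rlt_dec x e); [reflexivity|].
  replace x with e by lra. destruct (Rlt_dec (1 - e) e); [lra|ring].
Qed.

Lemma Geps_mid x : e <= x <= 1 - e -> Geps e x = G x.
Proof. intros H. unfold Geps. destruct (Rlt_dec x e), (Rlt_dec (1 - e) x); lra || reflexivity. Qed.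

Lemma Geps_hi x : 1 - e <= x ->
  Geps e x = G (1 - e) + dG (1 - e) * (x - (1 - e)) + d2G (1 - e) / 2 * (x - (1 - e)) ^ 2.
Proof.
  intros H. unfold Geps. destruct (Rlt_dec x e); [lra|].
  destruct (Rlt_dec (1 - e) x); [reflexivity|]. replace x with (1 - e) by lra. ring.
Qed.

Lemma dGeps_lo x : x <= e -> dGeps e x = dG e + d2G e * (x - e).
Proof.
  intros H. unfold dGeps. destruct (Rlt_dec x e); [reflexivity|].
  replace x with e by lra. destruct (Rlt_dec (1 - e) e); [lra|ring].
Qed.

Lemma dGeps_mid x : e <= x <= 1 - e -> dGeps e x = dG x.
Proof. intros H. unfold dGeps. destruct (Rlt_dec x e), (Rlt_dec (1 - e) x); lra || reflexivity. Qed.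

Lemma dGeps_hi x : 1 - e <= x -> dGeps e x = dG (1 - e) + d2G (1 - e) * (x - (1 - e)).
Proof.
  intros H. unfold dGeps. destruct (Rlt_dec x e); [lra|].
  destruct (Rlt_dec (1 - e) x); [reflexivity|]. replace x with (1 - e) by lra. ring.
Qed.

Lemma piecewise_ind (P : R -> R -> Prop) :
  (forall a m b, a <= m <= b -> P a m -> P m b -> P a b) ->
  (forall a b, a <= b <= e -> P a b) ->
  (forall a b, e <= a -> a <= b <= 1 - e -> P a b) ->
  (forall a b, 1 - e <= a <= b -> P a b) ->
  forall a b, a <= b -> P a b.
Proof.
  intros Hchain Hlo Hmid Hhi a b Hab.
  assert (Hup : forall a, e <= a -> a <= b -> P a b).
  { intros a' H1 H2. destruct (Rle_dec b (1 - e)); [apply Hmid; lra|].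
    destruct (Rle_dec (1 - e) a'); [apply Hhi; lra|].
    apply (Hchain a' (1 - e) b); [lra|apply Hmid; lra|apply Hhi; lra]. }
  destruct (Rle_dec b e); [apply Hlo; lra|].
  destruct (Rle_dec e a); [apply Hup; lra|].
  apply (Hchain a e b); [lra|apply Hlo; lra|apply Hup; lra].
Qed.

Lemma dGeps_increasing x y : x < y -> dGeps e x < dGeps e y.
Proof.
  assert (He1 : 0 < d2G e) by (apply d2G_pos; lra).
  assert (He2 : 0 < d2G (1 - e)) by (apply d2G_pos; lra).
  revert x y. refine (fun x y Hxy => piecewise_ind (fun a b => a < b -> dGeps e a < dGeps e b)
    _ _ _ _ x y (Rlt_le _ _ Hxy) Hxy).
  - intros a m b Hm Ham Hmb Hab.
    destruct (Req_dec a m) as [<-|]; [auto|]. destruct (Req_dec m b) as [<-|]; [auto|].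
    transitivity (dGeps e m); [apply Ham|apply Hmb]; lra.
  - intros a b Hb Hab. rewrite !dGeps_lo by lra. nra.
  - intros a b Ha Hb Hab. rewrite !dGeps_mid by lra. apply dG_increasing; lra.
  - intros a b Ha Hab. rewrite !dGeps_hi by lra. nra.
Qed.

Lemma dGeps_nondecreasing x y : x <= y -> dGeps e x <= dGeps e y.
Proof. intros H. destruct (Req_dec x y) as [->|]; [lra|]. left. apply dGeps_increasing. lra. Qed.

Definition Geps_chord a b :=
  dGeps e a * (b - a) <= Geps e b - Geps e a <= dGeps e b * (b - a).

Lemma Geps_chord_all a b : a <= b -> Geps_chord a b.
Proof.
  apply piecewise_ind; unfold Geps_chord.
  - intros a' m b' Hm [H1 H2] [H3 H4].
    pose proof (dGeps_nondecreasing a' m ltac:(lra)).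
    pose proof (dGeps_nondecreasing m b' ltac:(lra)). split; nra.
  - intros a' b' Hb. rewrite !Geps_lo, !dGeps_lo by lra.
    assert (0 <= d2G e * (b' - a') ^ 2)
      by (apply Rmult_le_pos; [left; apply d2G_pos|apply pow2_ge_0]; lra).
    split; lra.
  - intros a' b' Ha Hb. rewrite !Geps_mid, !dGeps_mid by lra.
    destruct (Req_dec a' b') as [<-|Hne]; [lra|].
    destruct (MVT_cor2 G dG a' b') as [c [Hc1 Hc2]]; [lra| |].
    { intros c Hc. apply G_derivative. lra. }
    rewrite Hc1.
    assert (dG a' <= dG c) by (left; apply dG_increasing; lra).
    assert (dG c <= dG b') by (left; apply dG_increasing; lra). split; nra.
  - intros a' b' Ha. rewrite !Geps_hi, !dGeps_hi by lra.
    assert (0 <= d2G (1 - e) * (b' - a') ^ 2)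
      by (apply Rmult_le_pos; [left; apply d2G_pos|apply pow2_ge_0]; lra).
    split; lra.
Qed.

Lemma Geps_tangent_le x y : Geps e x - Geps e y <= (x - y) * dGeps e x.
Proof.
  destruct (Rle_dec y x) as [Hyx|Hxy].
  - destruct (Geps_chord_all y x Hyx). nra.
  - destruct (Geps_chord_all x y ltac:(lra)). nra.
Qed.

Lemma Meps_pos x : 0 < Meps e x.
Proof. unfold Meps. destruct (Rlt_dec x e), (Rlt_dec (1 - e) x); nra. Qed.

End RegularizedLogPotential.

Lemma MG_mul_jump eps phi v k : 0 < eps < 1 / 2 ->
  MG eps phi v k * (dGeps eps (phi (v k)) - dGeps eps (phi (v O))) = phi (v k) - phi (v O).
Proof.
  intros He. unfold MG. destruct (Req_EM_T (phi (v k)) (phi (v O))) as [->|Hne]; [ring|].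
  field. destruct (Rlt_dec (phi (v k)) (phi (v O))) as [Hlt|Hge].
  - pose proof (dGeps_increasing eps He _ _ Hlt). lra.
  - pose proof (dGeps_increasing eps He (phi (v O)) (phi (v k)) ltac:(lra)). lra.
Qed.

Lemma MG_nonneg eps phi v k : 0 < eps < 1 / 2 -> 0 <= MG eps phi v k.
Proof.
  intros He. pose proof (MG_mul_jump eps phi v k He) as Hjump. unfold MG in *.
  destruct (Req_EM_T (phi (v k)) (phi (v O))) as [_|Hne].
  - unfold d2Geps. rewrite Rinv_inv. left. apply Meps_pos. exact He.
  - set (m := (phi (v k) - phi (v O)) / _) in *.
    set (x := phi (v k)) in *. set (y := phi (v O)) in *.
    destruct (Rlt_dec x y) as [Hlt|Hge].
    + pose proof (dGeps_increasing eps He _ _ Hlt). nra.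
    + pose proof (dGeps_increasing eps He y x ltac:(lra)). nra.
Qed.

Lemma Rmat_mul_jump eta phi v k :
  Rmat eta phi v k * (phi (v k) - phi (v O)) = dFc eta (phi (v k)) - dFc eta (phi (v O)).
Proof.
  unfold Rmat. destruct (Req_EM_T (phi (v k)) (phi (v O))) as [->|Hne]; [ring|].
  field. lra.
Qed.

Lemma Rmat_nonneg eta phi v k : 0 < eta -> 0 <= Rmat eta phi v k.
Proof.
  intros Heta. assert (HK : 0 < / (4 * eta ^ 2)) by (apply Rinv_0_lt_compat; nra).
  unfold Rmat, d2Fc, dFc. destruct (Req_EM_T (phi (v k)) (phi (v O))) as [_|Hne].
  - apply Rmult_le_pos; [lra|]. pose proof (pow2_ge_0 (2 * phi (v O) - 1)). nra.
  - set (x := phi (v k)) in *. set (y := phi (v O)) in *.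
    replace (_ / (x - y))
      with (/ (4 * eta ^ 2) * (4 * ((x - 1/2) + (y - 1/2) / 2) ^ 2 + 3 * (y - 1/2) ^ 2))
      by (field; lra).
    apply Rmult_le_pos; [lra|].
    pose proof (pow2_ge_0 ((x - 1/2) + (y - 1/2) / 2)). pose proof (pow2_ge_0 (y - 1/2)). lra.
Qed.

(* F_c is convex and F_e concave. *)
Lemma F_split_le eta x y : 0 < eta -> F eta x - F eta y <= (dFc eta x + dFe eta y) * (x - y).
Proof.
  intros Heta. assert (HK : 0 < / (4 * eta ^ 2)) by (apply Rinv_0_lt_compat; nra).
  unfold F, dFc, dFe.
  assert (0 <= (x - y) ^ 2 * (2 * (x - 1/2) ^ 2 + ((x - 1/2) + (y - 1/2)) ^ 2 + 1/2)).
  { apply Rmult_le_pos; [apply pow2_ge_0|].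
    pose proof (pow2_ge_0 (x - 1/2)). pose proof (pow2_ge_0 ((x - 1/2) + (y - 1/2))). lra. }
  replace ((/ (4 * eta ^ 2) * (4 * x ^ 3 - 6 * x ^ 2 + 3 * x) + - / (4 * eta ^ 2) * y) * (x - y))
    with (/ (4 * eta ^ 2) * (x ^ 2 * (x - 1) ^ 2) - / (4 * eta ^ 2) * (y ^ 2 * (y - 1) ^ 2)
          + / (4 * eta ^ 2)
            * ((x - y) ^ 2 * (2 * (x - 1/2) ^ 2 + ((x - 1/2) + (y - 1/2)) ^ 2 + 1/2)))
    by (field; lra).
  nra.
Qed.

Lemma F_nonneg eta x : 0 < eta -> 0 <= F eta x.
Proof.
  intros Heta. apply Rmult_le_pos; [left; apply Rinv_0_lt_compat; nra|].
  apply Rmult_le_pos; apply pow2_ge_0.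
Qed.

Section MeshIdentities.
Variables (d : nat) (node : nat -> nat -> R) (ne : nat) (el : nat -> nat -> nat).

Local Notation stiff := (stiff d node ne el).
Local Notation a_form := (a_form d node ne el).
Local Notation int_Ih := (int_Ih d node ne el).
Local Notation ip_h := (ip_h d node ne el).

Lemma a_form_MG_dGeps eps u mu : 0 < eps < 1 / 2 ->
  a_form (MG eps u) mu (fun n => dGeps eps (u n)) = stiff mu u.
Proof.
  intros He. apply a_form_transfer. intros v k.
  unfold gradk. rewrite <- (MG_mul_jump eps u v k He). unfold Rdiv. ring.
Qed.

Lemma stiff_dFc eta u : stiff u (fun n => dFc eta (u n)) = a_form (Rmat eta u) u u.
Proof.
  apply a_form_transfer. intros v k.
  unfold gradk. rewrite <- (Rmat_mul_jump eta u v k). unfold Rdiv. ring.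
Qed.

Lemma int_Ih_Geps_increment_le eps u w : 0 < eps < 1 / 2 ->
  int_Ih (fun n => Geps eps (u n)) - int_Ih (fun n => Geps eps (w n))
  <= ip_h (fun n => u n - w n) (fun n => dGeps eps (u n)).
Proof.
  intros He.
  replace (_ - _) with (int_Ih (fun n => 1 * Geps eps (u n) + (-1) * Geps eps (w n)))
    by (rewrite int_Ih_lin; ring).
  apply int_Ih_le. intros n. pose proof (Geps_tangent_le eps He (u n) (w n)). lra.
Qed.

Lemma int_Ih_F_increment_le eta u w : 0 < eta ->
  int_Ih (fun n => F eta (u n)) - int_Ih (fun n => F eta (w n))
  <= ip_h (fun n => dFc eta (u n) + dFe eta (w n)) (fun n => u n - w n).
Proof.
  intros Heta.
  replace (_ - _) with (int_Ih (fun n => 1 * F eta (u n) + (-1) * F eta (w n)))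
    by (rewrite int_Ih_lin; ring).
  apply int_Ih_le. intros n. pose proof (F_split_le eta (u n) (w n) Heta). lra.
Qed.

End MeshIdentities.

Definition discrete_energy d node ne el eta (u : nat -> R) : R :=
  / 2 * stiff d node ne el u u + int_Ih d node ne el (fun n => F eta (u n)).

Section Scheme.
Variables (d : nat) (node : nat -> nat -> R) (ne : nat) (el : nat -> nat -> nat).
Variables (eta eps dt : R) (phin phi1 mu1 : nat -> R).
Hypotheses (Heta : 0 < eta) (Heps : 0 < eps < 1 / 2) (Hdt : 0 < dt).
Hypothesis Hscheme : Geps_scheme d node ne el eta eps dt phin phi1 mu1.

Local Notation stiff := (stiff d node ne el).
Local Notation a_form := (a_form d node ne el).
Local Notation int_Ih := (int_Ih d node ne el).
Local Notation ip_h := (ip_h d node ne el).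

Lemma scheme_Geps_estimate :
  let omega := fun n => mu1 n - (dFc eta (phi1 n) + dFe eta (phin n)) in
  (int_Ih (fun n => Geps eps (phi1 n)) - int_Ih (fun n => Geps eps (phin n))) / dt
  + ip_h omega omega + a_form (Rmat eta phi1) phi1 phi1
  <= / (8 * eta ^ 2) * (stiff phin phin + stiff phi1 phi1).
Proof.
  intros omega. destruct Hscheme as [Hmass Hchem].
  set (K := / (4 * eta ^ 2)). assert (HK : 0 < K) by (apply Rinv_0_lt_compat; nra).
  set (X := stiff mu1 phi1).
  specialize (Hmass (fun n => dGeps eps (phi1 n))).
  rewrite (a_form_MG_dGeps _ _ _ _ _ _ _ Heps) in Hmass. fold X in Hmass.
  assert (Hrate : (int_Ih (fun n => Geps eps (phi1 n)) - int_Ih (fun n => Geps eps (phin n))) / dt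
                  <= - X).
  { pose proof (int_Ih_Geps_increment_le d node ne el eps phi1 phin Heps).
    assert (0 < / dt) by (apply Rinv_0_lt_compat, Hdt). unfold Rdiv, ip_h in *. nra. }
  specialize (Hchem omega).
  assert (Homega : ip_h omega omega = stiff phi1 omega).
  { assert (ip_h omega omega
            = ip_h mu1 omega - ip_h (fun n => dFc eta (phi1 n) + dFe eta (phin n)) omega).
    { transitivity (int_Ih (fun n => 1 * (mu1 n * omega n)
                       + (-1) * ((dFc eta (phi1 n) + dFe eta (phin n)) * omega n))).
      - apply int_Ih_ext. intros n. unfold omega. ring.
      - rewrite int_Ih_lin. unfold ip_h. ring. }
    lra. }
  assert (Hgrad : stiff phi1 omega = X - a_form (Rmat eta phi1) phi1 phi1 + K * stiff phi1 phin).
  { unfold stiff at 1. rewrite (a_form_ext_r _ _ _ _ _ _ omega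
      (fun n => 1 * mu1 n + 1 * ((-1) * dFc eta (phi1 n) + K * phin n)))
      by (intros n; unfold omega, dFe, K; ring).
    rewrite !a_form_lin_r. fold (stiff phi1 mu1) (stiff phi1 phin).
    rewrite <- stiff_dFc. unfold X, stiff. rewrite (a_form_comm _ _ _ _ _ phi1 mu1). ring. }
  pose proof (stiff_cross_le d node ne el phi1 phin).
  replace (/ (8 * eta ^ 2)) with (K / 2) by (unfold K; field; lra).
  rewrite Homega, Hgrad. nra.
Qed.

Lemma scheme_energy_decay :
  discrete_energy d node ne el eta phi1 <= discrete_energy d node ne el eta phin.
Proof.
  destruct Hscheme as [Hmass Hchem]. unfold discrete_energy.
  specialize (Hmass mu1). specialize (Hchem (fun n => phi1 n - phin n)).
  assert (Hdiss : 0 <= a_form (MG eps phi1) mu1 mu1)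
    by (apply a_form_nonneg; intros; apply MG_nonneg, Heps).
  assert (Hwork : ip_h mu1 (fun n => phi1 n - phin n) <= 0).
  { assert (ip_h mu1 (fun n => phi1 n - phin n) = ip_h (fun n => phi1 n - phin n) mu1)
      by (apply int_Ih_ext; intros; cbv beta; ring).
    assert (0 < / dt) by (apply Rinv_0_lt_compat, Hdt). nra. }
  assert (Hgrad : / 2 * stiff phi1 phi1 - / 2 * stiff phin phin
                  <= stiff phi1 (fun n => phi1 n - phin n)).
  { unfold stiff. rewrite (a_form_ext_r _ _ _ _ _ _ (fun n => phi1 n - phin n)
                             (fun n => 1 * phi1 n + (-1) * phin n))
      by (intros; ring).
    rewrite a_form_lin_r. pose proof (stiff_cross_le d node ne el phi1 phin).
    unfold stiff in *. lra. }
  pose proof (int_Ih_F_increment_le d node ne el eta phi1 phin Heta).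
  lra.
Qed.

Lemma scheme_Geps_increment_le :
  int_Ih (fun n => Geps eps (phi1 n)) - int_Ih (fun n => Geps eps (phin n))
  <= dt * (/ (8 * eta ^ 2) * (stiff phin phin + stiff phi1 phi1)).
Proof.
  pose proof scheme_Geps_estimate as Hest. cbv zeta in Hest.
  pose proof (int_Ih_nonneg d node ne el
                (fun n => (mu1 n - (dFc eta (phi1 n) + dFe eta (phin n)))
                          * (mu1 n - (dFc eta (phi1 n) + dFe eta (phin n))))
                (fun n => Rle_0_sqr _)).
  pose proof (a_form_nonneg d node ne el (Rmat eta phi1) phi1
                (fun v k => Rmat_nonneg eta phi1 v k Heta)).
  set (D := int_Ih (fun n => Geps eps (phi1 n)) - int_Ih (fun n => Geps eps (phin n))) in *.
  replace D with (dt * (D / dt)) by (field; lra).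
  apply Rmult_le_compat_l; [lra|]. unfold ip_h in *. lra.
Qed.

End Scheme.

Lemma discrete_energy_nonneg d node ne el eta u :
  0 < eta -> 0 <= discrete_energy d node ne el eta u.
Proof.
  intros Heta. pose proof (stiff_nonneg d node ne el u).
  pose proof (int_Ih_nonneg d node ne el (fun x => F eta (u x)) (fun x => F_nonneg eta _ Heta)).
  unfold discrete_energy. lra.
Qed.

Lemma scheme_stiff_le_initial_energy d node ne el eta eps dt (phi mu : nat -> nat -> R) N m :
  0 < eta -> 0 < eps < 1 / 2 -> 0 < dt ->
  (forall k, (k < N)%nat -> Geps_scheme d node ne el eta eps dt (phi k) (phi (S k)) (mu (S k))) ->
  (m <= N)%nat ->
  stiff d node ne el (phi m) (phi m) <= 2 * discrete_energy d node ne el eta (phi O).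
Proof.
  intros Heta Heps Hdt Hscheme Hm.
  assert (Hdec : discrete_energy d node ne el eta (phi m)
                 <= discrete_energy d node ne el eta (phi O) + INR m * 0).
  { apply (sum_increments_le (fun m => discrete_energy d node ne el eta (phi m))).
    intros k Hk.
    pose proof (scheme_energy_decay d node ne el eta eps dt (phi k) (phi (S k)) (mu (S k))
                  Heta Heps Hdt (Hscheme k ltac:(lia))).
    lra. }
  pose proof (int_Ih_nonneg d node ne el (fun x => F eta (phi m x)) (fun x => F_nonneg eta _ Heta)).
  unfold discrete_energy in *. lra.
Qed.

Definition double_well (x : R) : R := x ^ 2 * (x - 1) ^ 2.

(* double_well (x + h) = sum_(m <= 4) double_well_taylor m x * h ^ m *)
Definition double_well_taylor (m : nat) (x : R) : R :=
  match m with
  | O => double_well x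
  | 1 => 4 * x ^ 3 - 6 * x ^ 2 + 2 * x
  | 2 => 6 * x ^ 2 - 6 * x + 1
  | 3 => 4 * x - 2
  | 4 => 1
  | _ => 0
  end.

(* complete homogeneous symmetric polynomial of degree m in a 0, ..., a (n-1) *)
Fixpoint hsym (m n : nat) (a : nat -> R) : R :=
  match n with
  | O => match m with O => 1 | _ => 0 end
  | S n' => sum_lt (S m) (fun i => a O ^ i * hsym (m - i) n' (fun k => a (S k)))
  end.

(* Integral of double_well (b + l . a) over the simplex {l >= 0, l_1 + ... + l_n <= s}:
   expand at the vertex l = 0 and use  int (l . a)^m = s^(m+n) m! / (m+n)! hsym m n a. *)
Definition simplex_double_well (n : nat) (b : R) (a : nat -> R) (s : R) : R :=
  sum_lt 5 (fun m => double_well_taylor m b * s ^ (m + n) * hsym m n a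
                     / prod_lt n (fun j => INR (m + S j))).

Lemma simplex_double_well_degenerate n b a : simplex_double_well (S n) b a 0 = 0.
Proof.
  unfold simplex_double_well. cbn [sum_lt].
  rewrite !Nat.add_succ_r. cbn [pow]. unfold Rdiv. ring.
Qed.

Lemma continuous_sum_lt n (f : nat -> R -> R) x :
  (forall i, continuous (f i) x) -> continuous (fun y => sum_lt n (fun i => f i y)) x.
Proof.
  intros H. induction n as [|n IH]; cbn.
  - apply continuous_const.
  - apply (continuous_plus (fun y => sum_lt n (fun i => f i y)) (f n)); auto.
Qed.

Lemma simplex_double_well_continuous n b c a s t :
  continuous (fun t => simplex_double_well n (b + t * c) a (s - t)) t.
Proof.
  apply continuous_sum_lt. intros m. apply (@ex_derive_continuous R_AbsRing R_NormedModule).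
  unfold Rdiv. apply ex_derive_mult; [|apply ex_derive_const].
  apply ex_derive_mult; [|apply ex_derive_const].
  apply ex_derive_mult; [|auto_derive; trivial].
  destruct m as [|[|[|[|[|m]]]]]; cbn [double_well_taylor]; unfold double_well;
    auto_derive; trivial.
Qed.

(* True for every n; verified here by symbolic differentiation. *)
Lemma simplex_double_well_step n b a s t : (n <= 2)%nat ->
  is_derive (fun t => simplex_double_well (S n) (b + t * a O) a (s - t)) t
    (- simplex_double_well n (b + t * a O) (fun k => a (S k)) (s - t)).
Proof.
  intros Hn. unfold simplex_double_well.
  destruct n as [|[|[|n]]]; [..|lia];
    cbn [sum_lt hsym prod_lt double_well_taylor Nat.sub Nat.add INR]; unfold double_well;
    (auto_derive; [trivial|field]).
Qed.

Lemma sint_ext n s g g' : (forall l, g l = g' l) -> sint n s g = sint n s g'.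
Proof.
  revert s g g'. induction n as [|n IH]; intros s g g' H; [apply H|].
  cbn [sint]. apply RInt_ext. intros t _. apply IH. intros l. apply H.
Qed.

Lemma sint_double_well n K b a s : (n <= 3)%nat ->
  sint n s (fun l => K * double_well (b + sum_lt n (fun k => nth k l 0 * a k)))
  = K * simplex_double_well n b a s.
Proof.
  revert b a s. induction n as [|n IH]; intros b a s Hn.
  - unfold simplex_double_well. cbn [sint sum_lt hsym prod_lt double_well_taylor Nat.add pow].
    rewrite Rplus_0_r. field.
  - cbn [sint].
    rewrite (RInt_ext _
      (fun t => K * simplex_double_well n (b + t * a O) (fun k => a (S k)) (s - t))).
    2:{ intros t _. rewrite <- IH by lia. apply sint_ext. intros l.
        rewrite sum_lt_shift. cbn [nth]. f_equal. f_equal. ring. }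
    apply is_RInt_unique.
    replace (K * simplex_double_well (S n) b a s)
      with (minus (- K * simplex_double_well (S n) (b + s * a O) a (s - s))
                  (- K * simplex_double_well (S n) (b + 0 * a O) a (s - 0))).
    2:{ rewrite Rminus_diag, simplex_double_well_degenerate, Rmult_0_l, Rplus_0_r, Rminus_0_r.
        unfold minus, plus, opp; cbn. ring. }
    apply (is_RInt_derive (fun t => - K * simplex_double_well (S n) (b + t * a O) a (s - t))).
    + intros t _.
      replace (K * _)
        with (- K * (- simplex_double_well n (b + t * a O) (fun k => a (S k)) (s - t)))
        by ring.
      apply (is_derive_scal (fun t => simplex_double_well (S n) (b + t * a O) a (s - t))).
      apply simplex_double_well_step. lia.
    + intros t _.
      apply (continuous_scal_r K (fun t => simplex_double_well n (b + t * a O) _ (s - t))).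
      apply simplex_double_well_continuous.
Qed.

(* If w = sum_i lambda_i u_i with sum_i lambda_i = 1, then
   w (w - 1) = sum_(i,j) lambda_i lambda_j (bary_coef u_i u_j), so the exact integral
   of double_well w = (w (w - 1))^2 is a Gram form in these coefficients, while
   double_well u_i = (bary_coef u_i u_i)^2.  The sums of squares below are LDL^T
   factorisations of that Gram form minus a multiple of its diagonal. *)
Definition bary_coef (x y : R) : R := x * y - (x + y) / 2.

Lemma double_well_lumped_le1 (u : nat -> R) :
  sum_lt 2 (fun k => double_well (u k))
  <= 100 * simplex_double_well 1 (u O) (fun k => u (S k) - u O) 1.
Proof.
  pose (z00 := bary_coef (u O) (u O)).
  pose (z01 := bary_coef (u O) (u 1%nat)).
  pose (z11 := bary_coef (u 1%nat) (u 1%nat)).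
  replace (sum_lt 2 (fun k => double_well (u k))) with (z00 ^ 2 + z11 ^ 2)
    by (cbn [sum_lt]; unfold z00, z01, z11, bary_coef, double_well; field).
  enough (0 <= simplex_double_well 1 (u O) (fun k => u (S k) - u O) 1
               - / 100 * (z00 ^ 2 + z11 ^ 2)) by lra.
  replace (_ - _)
    with ((19/100) * ((10/57)*z11 + (10/19)*z01 + z00)^2
         + (23/285) * ((47/46)*z11 + z01)^2
         + (517/5175) * (z11)^2)
    by (unfold z00, z01, z11, bary_coef, simplex_double_well;
        cbn [sum_lt hsym prod_lt double_well_taylor Nat.sub Nat.add INR];
        unfold double_well; field).
  repeat apply Rplus_le_le_0_compat; (apply Rmult_le_pos; [lra|apply pow2_ge_0]).
Qed.

Lemma double_well_lumped_le2 (u : nat -> R) :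
  sum_lt 3 (fun k => double_well (u k))
  <= 100 * simplex_double_well 2 (u O) (fun k => u (S k) - u O) 1.
Proof.
  pose (z00 := bary_coef (u O) (u O)).
  pose (z01 := bary_coef (u O) (u 1%nat)).
  pose (z02 := bary_coef (u O) (u 2%nat)).
  pose (z11 := bary_coef (u 1%nat) (u 1%nat)).
  pose (z12 := bary_coef (u 1%nat) (u 2%nat)).
  pose (z22 := bary_coef (u 2%nat) (u 2%nat)).
  replace (sum_lt 3 (fun k => double_well (u k))) with (z00 ^ 2 + z11 ^ 2 + z22 ^ 2)
    by (cbn [sum_lt]; unfold z00, z01, z02, z11, z12, z22, bary_coef, double_well; field).
  enough (0 <= simplex_double_well 2 (u O) (fun k => u (S k) - u O) 1
               - / 100 * (z00 ^ 2 + z11 ^ 2 + z22 ^ 2)) by lra.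
  replace (_ - _)
    with ((7/300) * ((5/21)*z22 + (5/21)*z12 + (5/21)*z11 + (5/7)*z02 + (5/7)*z01 + z00)^2
         + (13/1260) * ((2/13)*z22 + (9/13)*z12 + (16/13)*z11 + (-1/13)*z02 + z01)^2
         + (2/195) * ((5/4)*z22 + (3/4)*z12 + (1/4)*z11 + z02)^2
         + (31/5400) * ((-5/31)*z22 + (25/31)*z12 + z11)^2
         + (1/155) * ((5/6)*z22 + z12)^2
         + (1/900) * (z22)^2)
    by (unfold z00, z01, z02, z11, z12, z22, bary_coef, simplex_double_well;
        cbn [sum_lt hsym prod_lt double_well_taylor Nat.sub Nat.add INR];
        unfold double_well; field).
  repeat apply Rplus_le_le_0_compat; (apply Rmult_le_pos; [lra|apply pow2_ge_0]).
Qed.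

Lemma double_well_lumped_le3 (u : nat -> R) :
  sum_lt 4 (fun k => double_well (u k))
  <= 1000 * simplex_double_well 3 (u O) (fun k => u (S k) - u O) 1.
Proof.
  pose (z00 := bary_coef (u O) (u O)).
  pose (z01 := bary_coef (u O) (u 1%nat)).
  pose (z02 := bary_coef (u O) (u 2%nat)).
  pose (z03 := bary_coef (u O) (u 3%nat)).
  pose (z11 := bary_coef (u 1%nat) (u 1%nat)).
  pose (z12 := bary_coef (u 1%nat) (u 2%nat)).
  pose (z13 := bary_coef (u 1%nat) (u 3%nat)).
  pose (z22 := bary_coef (u 2%nat) (u 2%nat)).
  pose (z23 := bary_coef (u 2%nat) (u 3%nat)).
  pose (z33 := bary_coef (u 3%nat) (u 3%nat)).
  replace (sum_lt 4 (fun k => double_well (u k))) with (z00 ^ 2 + z11 ^ 2 + z22 ^ 2 + z33 ^ 2)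
    by (cbn [sum_lt];
        unfold z00, z01, z02, z03, z11, z12, z13, z22, z23, z33, bary_coef, double_well; field).
  enough (0 <= simplex_double_well 3 (u O) (fun k => u (S k) - u O) 1
               - / 1000 * (z00 ^ 2 + z11 ^ 2 + z22 ^ 2 + z33 ^ 2)) by lra.
  replace (_ - _)
    with ((79/21000) * ((50/237)*z33 + (50/237)*z23 + (50/237)*z22 + (50/237)*z13 +
        (50/237)*z12 + (50/237)*z11 + (50/79)*z03 + (50/79)*z02 + (50/79)*z01 + z00)^2
         + (83/49770) * ((29/166)*z33 + (29/166)*z23 + (29/166)*z22 + (54/83)*z13 + (54/83)*z12 +
             (187/166)*z11 + (4/83)*z03 + (4/83)*z02 + z01)^2
         + (29/17430) * ((1/6)*z33 + (56/87)*z23 + (65/58)*z22 + (25/174)*z13 + (18/29)*z12 +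
             (7/58)*z11 + (4/87)*z03 + z02)^2
         + (13/7830) * ((29/26)*z33 + (8/13)*z23 + (3/26)*z22 + (8/13)*z13 + (3/26)*z12 +
             (3/26)*z11 + z03)^2
         + (1759/1228500) * ((125/3518)*z33 + (125/3518)*z23 + (125/3518)*z22 + (2075/3518)*z13 +
             (2075/3518)*z12 + z11)^2
         + (1123/985040) * ((185/10107)*z33 + (3703/10107)*z23 + (2407/3369)*z22 +
             (-149/3369)*z13 + z12)^2
         + (23/20214) * ((43/60)*z33 + (23/60)*z23 + (1/20)*z22 + z13)^2
         + (71/84000) * ((-5/639)*z33 + (395/639)*z23 + z22)^2
         + (3427/3450600) * ((79/149)*z33 + z23)^2
         + (253/447000) * (z33)^2)
    by (unfold z00, z01, z02, z03, z11, z12, z13, z22, z23, z33, bary_coef, simplex_double_well;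
        cbn [sum_lt hsym prod_lt double_well_taylor Nat.sub Nat.add INR];
        unfold double_well; field).
  repeat apply Rplus_le_le_0_compat; (apply Rmult_le_pos; [lra|apply pow2_ge_0]).
Qed.

Lemma double_well_nonneg x : 0 <= double_well x.
Proof. unfold double_well. apply Rmult_le_pos; apply pow2_ge_0. Qed.

Lemma double_well_lumped_le n u : (1 <= n <= 3)%nat ->
  sum_lt (S n) (fun k => double_well (u k))
  <= 1000 * simplex_double_well n (u O) (fun k => u (S k) - u O) 1.
Proof.
  intros Hn.
  assert (0 <= sum_lt (S n) (fun k => double_well (u k)))
    by (apply sum_lt_nonneg; intros; apply double_well_nonneg).
  destruct n as [|[|[|[|n]]]]; try lia.
  - pose proof (double_well_lumped_le1 u). lra.
  - pose proof (double_well_lumped_le2 u). lra.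
  - apply double_well_lumped_le3.
Qed.

Lemma elem_lumped_F_le d node v eta u : (1 <= d <= 3)%nat -> 0 < eta ->
  vol d node v / INR (S d) * sum_lt (S d) (fun k => F eta (u (v k)))
  <= 1000 * int_elem_comp d node v (F eta) u.
Proof.
  intros Hd Heta. set (K := / (4 * eta ^ 2)). assert (HK : 0 < K) by (apply Rinv_0_lt_compat; nra).
  unfold int_elem_comp.
  set (J := simplex_double_well d (u (v O)) (fun k => u (v (S k)) - u (v O)) 1).
  assert (Hint : sint d 1 (fun l => F eta (u (v O)
                                  + sum_lt d (fun k => nth k l 0 * (u (v (S k)) - u (v O)))))
                 = K * J)
    by (apply (sint_double_well d); lia).
  assert (Hlump : sum_lt (S d) (fun k => F eta (u (v k)))
                  = K * sum_lt (S d) (fun k => double_well (u (v k))))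
    by apply sum_lt_scal.
  rewrite Hint, Hlump.
  pose proof (double_well_lumped_le d (fun k => u (v k)) Hd) as Hdw. cbv beta in Hdw. fold J in Hdw.
  assert (0 <= sum_lt (S d) (fun k => double_well (u (v k))))
    by (apply sum_lt_nonneg; intros; apply double_well_nonneg).
  pose proof (lumped_weight_nonneg d node v). pose proof (lumped_weight_le_jac d node v).
  apply Rle_trans with (jac d node v * (K * sum_lt (S d) (fun k => double_well (u (v k))))).
  - apply Rmult_le_compat_r; [apply Rmult_le_pos|]; lra.
  - assert (0 <= jac d node v) by apply Rabs_pos.
    replace (1000 * _) with (jac d node v * (K * (1000 * J))) by ring.
    apply Rmult_le_compat_l; [lra|]. apply Rmult_le_compat_l; lra.
Qed.

Lemma discrete_energy_le_energy d node ne el eta u : (1 <= d <= 3)%nat -> 0 < eta ->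
  discrete_energy d node ne el eta u <= 1000 * energy d node ne el eta u.
Proof.
  intros Hd Heta. unfold discrete_energy, energy.
  assert (int_Ih d node ne el (fun n => F eta (u n))
          <= 1000 * sum_lt ne (fun i => int_elem_comp d node (el i) (F eta) u)).
  { rewrite <- sum_lt_scal. apply sum_lt_le. intros i _. apply elem_lumped_F_le; assumption. }
  pose proof (stiff_nonneg d node ne el u). lra.
Qed.

Lemma Geps_integral_bound d node ne el eta eps T N (phi mu : nat -> nat -> R) n :
  (1 <= d <= 3)%nat -> 0 < eta -> 0 < eps < 1 / 2 -> 0 < T ->
  (forall m, (m < N)%nat ->
     Geps_scheme d node ne el eta eps (T / INR N) (phi m) (phi (S m)) (mu (S m))) ->
  (n < N)%nat ->
  int_Ih d node ne el (fun x => Geps eps (phi (S n) x))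
  <= (Rabs (int_Ih d node ne el (fun x => Geps eps (phi O x)))
      + 500 * Rabs (energy d node ne el eta (phi O))) * (1 + T / eta ^ 2).
Proof.
  intros Hd Heta Heps HT Hscheme Hn.
  assert (HNpos : 0 < INR N) by (apply lt_0_INR; lia).
  set (dt := T / INR N). assert (Hdt : 0 < dt) by (apply Rdiv_lt_0_compat; lra).
  set (Gm := fun m => int_Ih d node ne el (fun x => Geps eps (phi m x))).
  set (E0 := discrete_energy d node ne el eta (phi O)).
  set (E := energy d node ne el eta (phi O)).
  assert (Hstep : forall m, (m < S n)%nat -> Gm (S m) - Gm m <= dt * (E0 / (2 * eta ^ 2))).
  { intros m Hm.
    pose proof (scheme_Geps_increment_le d node ne el eta eps dt (phi m) (phi (S m)) (mu (S m))
                  Heta Heps Hdt (Hscheme m ltac:(lia))).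
    pose proof (scheme_stiff_le_initial_energy d node ne el eta eps dt phi mu N m
                  Heta Heps Hdt Hscheme ltac:(lia)) as Hm0.
    pose proof (scheme_stiff_le_initial_energy d node ne el eta eps dt phi mu N (S m)
                  Heta Heps Hdt Hscheme ltac:(lia)) as Hm1.
    replace (E0 / (2 * eta ^ 2)) with (/ (8 * eta ^ 2) * (4 * E0)) by (field; lra).
    assert (0 < / (8 * eta ^ 2)) by (apply Rinv_0_lt_compat; nra).
    fold E0 in Hm0, Hm1. eapply Rle_trans; [eassumption|].
    apply Rmult_le_compat_l; [lra|]. apply Rmult_le_compat_l; lra. }
  pose proof (sum_increments_le Gm _ (S n) Hstep) as Hsum.
  assert (Htime : INR (S n) * dt <= T).
  { assert (INR (S n) <= INR N) by (apply le_INR; lia).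
    replace T with (INR N * dt) by (unfold dt; field; lra).
    apply Rmult_le_compat_r; lra. }
  assert (HE0 : E0 <= 1000 * E) by (apply discrete_energy_le_energy; assumption).
  assert (0 <= E0) by (apply discrete_energy_nonneg, Heta).
  assert (Hgrowth : INR (S n) * (dt * (E0 / (2 * eta ^ 2))) <= T / eta ^ 2 * (500 * Rabs E)).
  { replace (T / eta ^ 2 * (500 * Rabs E)) with (T * (1000 * Rabs E / (2 * eta ^ 2)))
      by (field; lra).
    pose proof (pos_INR (S n)).
    rewrite <- Rmult_assoc. apply Rmult_le_compat; [nra|apply Rdiv_le_0_compat; nra|exact Htime|].
    apply Rmult_le_compat_r; [left; apply Rinv_0_lt_compat; nra|].
    pose proof (Rle_abs E). lra. }
  assert (0 <= T / eta ^ 2) by (apply Rdiv_le_0_compat; nra).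
  pose proof (Rle_abs (Gm O)). pose proof (Rabs_pos (Gm O)). pose proof (Rabs_pos E).
  fold (Gm (S n)) (Gm O). nra.
Qed.

Theorem lemma5 :
  (forall (d nn : nat) (node : nat -> nat -> R) (ne : nat) (el : nat -> nat -> nat)
      (Omega : (nat -> R) -> Prop),
    (1 <= d <= 3)%nat -> structured_triangulation d nn node ne el Omega ->
    forall (eta eps T : R) (N : nat),
      0 < eta -> 0 < eps < 1 / 2 -> 0 < T -> (1 <= N)%nat ->
      forall phin phi1 mu1 : nat -> R,
        Geps_scheme d node ne el eta eps (T / INR N) phin phi1 mu1 ->
        let dt := T / INR N in
        let omega := fun n => mu1 n - (dFc eta (phi1 n) + dFe eta (phin n)) in
        (int_Ih d node ne el (fun n => Geps eps (phi1 n))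
           - int_Ih d node ne el (fun n => Geps eps (phin n))) / dt
        + ip_h d node ne el omega omega
        + a_form d node ne el (Rmat eta phi1) phi1 phi1
        <= / (8 * eta ^ 2) * (stiff d node ne el phin phin + stiff d node ne el phi1 phi1))
  /\
  (forall d : nat, (1 <= d <= 3)%nat ->
    exists C : R -> R -> R,
    forall (nn : nat) (node : nat -> nat -> R) (ne : nat) (el : nat -> nat -> nat)
      (Omega : (nat -> R) -> Prop),
    structured_triangulation d nn node ne el Omega ->
    forall (eta eps T : R) (N : nat),
      0 < eta -> 0 < eps < 1 / 2 -> 0 < T -> (1 <= N)%nat ->
      forall phi mu : nat -> nat -> R,
        (forall m, (m < N)%nat ->
           Geps_scheme d node ne el eta eps (T / INR N) (phi m) (phi (S m)) (mu (S m))) ->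
        forall n, (n < N)%nat ->
          int_Ih d node ne el (fun x => Geps eps (phi (S n) x))
          <= C (energy d node ne el eta (phi O))
               (int_Ih d node ne el (fun x => Geps eps (phi O x)))
             * (1 + T / eta ^ 2)).
Proof.
  (* Neither part needs the triangulation hypotheses, and the first holds in any dimension. *)
  split.
  - intros d nn node ne el Omega _ _ eta eps T N Heta Heps HT HN phin phi1 mu1 Hs.
    apply scheme_Geps_estimate; [exact Heta|exact Heps| |exact Hs].
    apply Rdiv_lt_0_compat; [lra|apply lt_0_INR; lia].
  - intros d Hd. exists (fun E G0 => Rabs G0 + 500 * Rabs E).
    intros nn node ne el Omega _ eta eps T N Heta Heps HT _ phi mu Hs n Hn.
    exact (Geps_integral_bound d node ne el eta eps T N phi mu n Hd Heta Heps HT Hs Hn).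
Qed.
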